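(* Let $n$ be a positive integer and let $u$ denote the unique positive real root of $$x^{2n} + x^{2n-1} + \cdots + x^{n} - x^{n-1} - x^{n-2} - \cdots - x - 1 = 0$$ (so $u\in(0,1)$). Then $$2\,\mathrm{Li}_2\!\left(u^{n+1}\right) - 2\,\mathrm{Li}_2\!\left(u^{n}\right) - \mathrm{Li}_2(u) - n^2 \log^2(u) = -\zeta(2).$$
   Context: $\mathrm{Li}_2(z)=\sum_{k\ge1} z^k/k^2$ for $|z|\le 1$ is the dilogarithm, $\log$ is the real natural logarithm, and $\zeta(2)=\pi^2/6$. *)

From Stdlib Require Import Reals.
From Coquelicot Require Import Coquelicot.
Open Scope R_scope.

Definition Li2 (z : R) : R := Series (fun k : nat => z ^ (S k) / (INR (S k)) ^ 2).

Definition zeta2 : R := PI ^ 2 / 6.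

Definition Pn (n : nat) (x : R) : R :=
  sum_f_R0 (fun k => x ^ (n + k)) n - sum_f_R0 (fun k => x ^ k) (n - 1).

From Stdlib Require Import Reals Lra Lia.
From Coquelicot Require Import Coquelicot.
Open Scope R_scope.

(* Put a = u^n.  Multiplying P_n(u) = 0 by 1 - u gives u a^2 = 2a - 1, so that
   u^(n+1) = 2 - 1/a, u = (2a - 1)/a^2 and 1/2 < a < 1.  As Li2'(y) = -ln(1 - y)/y,
   the function G(a) = 2 Li2(2 - 1/a) - 2 Li2(a) - Li2((2a - 1)/a^2) - ln(a)^2 has
   zero derivative on (1/2, 1); letting a -> 1 (Abel's theorem) shows G = -Li2(1).
   Finally Li2(1) = pi^2/6 by Matsuoka's proof of Euler's formula: the ratios
   r_m = (int x^2 cos^(2m) x) / (int cos^(2m) x) over [0, pi/2] satisfy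
   r_m - r_(m+1) = 1/(2 (m+1)^2), r_0 = pi^2/12 and r_m -> 0. *)

(* Coquelicot's integration lemmas state their equalities in the carrier of a
   normed module; [ring] and [field] need them restated at type [R]. *)
Ltac at_type_R := match goal with |- ?a = ?b => change (@eq R a b) end.

Lemma continuous_of_ex_derive (f : R -> R) x : ex_derive f x -> continuous f x.
Proof. exact (@ex_derive_continuous R_AbsRing R_NormedModule f x). Qed.

Lemma ex_RInt_of_derivable (f : R -> R) a b : (forall x, ex_derive f x) -> ex_RInt f a b.
Proof.
  intros Hf. apply (@ex_RInt_continuous R_CompleteNormedModule).
  intros x _. apply continuous_of_ex_derive, Hf.
Qed.

Lemma RInt_is_derive (F f : R -> R) a b : a <= b ->
  (forall x, a <= x <= b -> is_derive F x (f x)) ->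
  (forall x, a <= x <= b -> continuous f x) -> RInt f a b = F b - F a :> R.
Proof.
  intros Hab HF Hf. apply is_RInt_unique.
  pose proof (is_RInt_derive F f a b) as H.
  rewrite Rmin_left, Rmax_right in H by lra. auto.
Qed.

Lemma RInt_lincomb2 (f g : R -> R) a b c d : ex_RInt f a b -> ex_RInt g a b ->
  RInt (fun x => c * f x + d * g x) a b = c * RInt f a b + d * RInt g a b :> R.
Proof.
  intros Hf Hg.
  change (fun x => c * f x + d * g x) with (fun x => plus (scal c (f x)) (scal d (g x))).
  rewrite (RInt_plus (V:=R_CompleteNormedModule)), !(RInt_scal (V:=R_CompleteNormedModule)); auto;
    apply (ex_RInt_scal (V:=R_CompleteNormedModule)); auto.
Qed.

Lemma RInt_lincomb3 (f g h : R -> R) a b c d e :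
  ex_RInt f a b -> ex_RInt g a b -> ex_RInt h a b ->
  RInt (fun x => c * f x + d * g x + e * h x) a b
  = c * RInt f a b + d * RInt g a b + e * RInt h a b :> R.
Proof.
  intros Hf Hg Hh.
  rewrite (RInt_ext (V:=R_CompleteNormedModule) _
    (fun x => 1 * (fun y => c * f y + d * g y) x + e * h x))
    by (intros; at_type_R; ring).
  rewrite RInt_lincomb2, RInt_lincomb2; auto.
  - at_type_R; ring.
  - apply (ex_RInt_plus (V:=R_CompleteNormedModule));
      apply (ex_RInt_scal (V:=R_CompleteNormedModule)); auto.
Qed.

Lemma is_derive_0_eq (f : R -> R) lo hi a b :
  (forall t, lo < t < hi -> is_derive f t 0) -> lo < a < hi -> lo < b < hi -> f b = f a.
Proof.
  intros Hf Ha Hb.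
  assert (Hin : forall t, Rmin a b <= t <= Rmax a b -> lo < t < hi).
  { intros t Ht. split.
    - apply Rlt_le_trans with (Rmin a b); [apply Rmin_glb_lt |]; lra.
    - apply Rle_lt_trans with (Rmax a b); [| apply Rmax_lub_lt]; lra. }
  destruct (MVT_gen f a b (fun _ => 0)) as [c [_ Hc]].
  - intros t Ht. apply Hf, Hin. lra.
  - intros t Ht. apply continuity_pt_filterlim, continuous_of_ex_derive.
    exists 0. apply Hf, Hin, Ht.
  - lra.
Qed.

Lemma is_lim_seq_inv_INR : is_lim_seq (fun n => / INR n) 0.
Proof.
  replace (Finite 0) with (Rbar_inv p_infty) by reflexivity.
  apply is_lim_seq_inv; [apply is_lim_seq_INR | discriminate].
Qed.

Lemma is_lim_seq_inv_succ : is_lim_seq (fun n => / INR (S n)) 0.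
Proof. apply (is_lim_seq_incr_1 (fun n => / INR n)), is_lim_seq_inv_INR. Qed.

Lemma is_derive_sin_cos_pow k x :
  is_derive (fun x => sin x * cos x ^ S k) x
    (INR (S (S k)) * cos x ^ S (S k) + - INR (S k) * cos x ^ k).
Proof.
  auto_derive; [trivial |]. change (pred (S k)) with k.
  change (match k with 0%nat => 1 | S _ => INR k + 1 end) with (INR (S k)).
  rewrite !S_INR, <- !tech_pow_Rmult.
  pose proof (sin2_cos2 x) as E. unfold Rsqr in E.
  replace (sin x * (1 * - sin x * ((INR k + 1) * cos x ^ k)))
    with (- (sin x * sin x) * ((INR k + 1) * cos x ^ k)) by ring.
  replace (sin x * sin x) with (1 - cos x * cos x) by lra.
  ring.
Qed.

(* The constraint [2 c = k + 2] cancels the terms in [x sin x cos^(k+1) x]. *)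
Lemma is_derive_wallis_parts k c x : 2 * c = INR (S (S k)) ->
  is_derive (fun x => x * cos x ^ S (S k) + c * (x ^ 2 * (sin x * cos x ^ S k))) x
    (1 * cos x ^ S (S k) + c * INR (S (S k)) * (x ^ 2 * cos x ^ S (S k))
     + - (c * INR (S k)) * (x ^ 2 * cos x ^ k)).
Proof.
  intros Hc. auto_derive; [trivial |].
  change (pred (S k)) with k. change (pred (S (S k))) with (S k).
  change (match k with 0%nat => 1 | S _ => INR k + 1 end) with (INR (S k)).
  rewrite !S_INR in *. rewrite <- !tech_pow_Rmult.
  assert (Es : sin x ^ 2 = 1 - cos x ^ 2)
    by (pose proof (sin2_cos2 x) as E; unfold Rsqr in E; simpl; lra).
  replace (INR k) with (2 * c - 2) by lra.
  at_type_R. ring_simplify. rewrite Es. ring.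
Qed.

Lemma xcos_le_sin x : 0 <= x <= PI / 2 -> x * cos x <= sin x.
Proof.
  intros Hx.
  destruct (MVT_gen (fun x => sin x - x * cos x) 0 x (fun t => t * sin t)) as [c [Hc Ec]].
  - intros t _. auto_derive; trivial. at_type_R. ring.
  - intros t _. apply continuity_pt_filterlim.
    apply (continuous_of_ex_derive (fun x => sin x - x * cos x)). auto_derive; trivial.
  - rewrite Rmin_left, Rmax_right in Hc by lra. rewrite sin_0 in Ec.
    assert (0 <= sin c) by (apply sin_ge_0; lra).
    assert (0 <= c * sin c * (x - 0)) by (apply Rmult_le_pos; [apply Rmult_le_pos |]; lra).
    lra.
Qed.

Definition wallis_I (n : nat) : R := RInt (fun x => cos x ^ (2 * n)) 0 (PI / 2).
Definition wallis_J (n : nat) : R := RInt (fun x => x ^ 2 * cos x ^ (2 * n)) 0 (PI / 2).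

Ltac ex_RInt_smooth := apply ex_RInt_of_derivable; intros; auto_derive; trivial.

Lemma wallis_I_succ n : INR (S (S (2 * n))) * wallis_I (S n) = INR (S (2 * n)) * wallis_I n.
Proof.
  pose proof PI2_RGT_0.
  pose proof (RInt_is_derive (fun x => sin x * cos x ^ S (2 * n)) _ 0 (PI / 2) ltac:(lra)
    (fun x _ => is_derive_sin_cos_pow (2 * n) x)) as E.
  specialize (E ltac:(intros; apply continuous_of_ex_derive; auto_derive; trivial)).
  rewrite RInt_lincomb2 in E by ex_RInt_smooth.
  rewrite sin_PI2, cos_PI2, sin_0, pow_i in E by lia.
  unfold wallis_I. replace (2 * S n)%nat with (S (S (2 * n))) by lia.
  lra.
Qed.

Lemma wallis_I_J m : wallis_I (S m)
  = INR (S m) * (INR (S (2 * m)) * wallis_J m - INR (S (S (2 * m))) * wallis_J (S m)).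
Proof.
  pose proof PI2_RGT_0.
  assert (Hc : 2 * INR (S m) = INR (S (S (2 * m)))) by (rewrite !S_INR, mult_INR; simpl; ring).
  pose proof (RInt_is_derive _ _ 0 (PI / 2) ltac:(lra)
    (fun x _ => is_derive_wallis_parts (2 * m) (INR (S m)) x Hc)) as E.
  specialize (E ltac:(intros; apply continuous_of_ex_derive; auto_derive; trivial)).
  rewrite RInt_lincomb3 in E by ex_RInt_smooth.
  rewrite cos_PI2, sin_0, (pow_i (S (2 * m))), pow_i in E by lia.
  unfold wallis_I, wallis_J. replace (2 * S m)%nat with (S (S (2 * m))) by lia.
  lra.
Qed.

Lemma wallis_J_bound m : 0 <= wallis_J (S m) <= wallis_I m - wallis_I (S m).
Proof.
  pose proof PI2_RGT_0. unfold wallis_J.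
  split.
  - replace 0 with (RInt (fun _ => 0) 0 (PI / 2)) at 1
      by (rewrite (RInt_const (V:=R_CompleteNormedModule)); apply Rmult_0_r).
    apply RInt_le; [lra | ex_RInt_smooth | ex_RInt_smooth |].
    intros x Hx. apply Rmult_le_pos; [apply pow2_ge_0 | apply pow_le, cos_ge_0; lra].
  - replace (wallis_I m - wallis_I (S m))
      with (RInt (fun x => 1 * cos x ^ (2 * m) + - 1 * cos x ^ (2 * S m)) 0 (PI / 2))
      by (rewrite RInt_lincomb2 by ex_RInt_smooth; unfold wallis_I; at_type_R; ring).
    apply RInt_le; [lra | ex_RInt_smooth | ex_RInt_smooth |].
    intros x Hx. replace (2 * S m)%nat with (S (S (2 * m))) by lia.
    (* [x cos x <= sin x] gives [x^2 cos^(2m+2) x <= sin^2 x cos^(2m) x]. *)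
    pose proof (xcos_le_sin x ltac:(lra)).
    assert (0 <= cos x) by (apply cos_ge_0; lra).
    assert (0 <= cos x ^ (2 * m)) by (apply pow_le; lra).
    pose proof (sin2_cos2 x) as E. unfold Rsqr in E.
    assert (x * cos x * (x * cos x) <= sin x * sin x)
      by (apply Rmult_le_compat; nra).
    rewrite <- !tech_pow_Rmult. nra.
Qed.

Lemma wallis_I_0 : wallis_I 0 = PI / 2.
Proof.
  change (RInt (fun _ => 1) 0 (PI / 2) = PI / 2).
  rewrite (RInt_const (V:=R_CompleteNormedModule)). rewrite Rminus_0_r. apply Rmult_1_r.
Qed.

Lemma wallis_J_0 : wallis_J 0 = (PI / 2) ^ 3 / 3.
Proof.
  pose proof PI2_RGT_0. unfold wallis_J.
  rewrite (RInt_is_derive (fun x => x ^ 3 / 3)); [at_type_R; field | lra | |].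
  - intros; auto_derive; trivial. simpl. at_type_R. field.
  - intros; apply continuous_of_ex_derive; auto_derive; trivial.
Qed.

Lemma wallis_I_pos n : 0 < wallis_I n.
Proof.
  induction n as [| n IH].
  - rewrite wallis_I_0. apply PI2_RGT_0.
  - pose proof (wallis_I_succ n).
    assert (0 < INR (S (S (2 * n)))) by (apply lt_0_INR; lia).
    assert (0 < INR (S (2 * n))) by (apply lt_0_INR; lia).
    nra.
Qed.

Definition wallis_ratio (n : nat) : R := wallis_J n / wallis_I n.

Lemma wallis_ratio_0 : wallis_ratio 0 = PI ^ 2 / 12.
Proof. unfold wallis_ratio. rewrite wallis_I_0, wallis_J_0. pose proof PI_RGT_0. field. lra. Qed.

Lemma wallis_ratio_step m : wallis_ratio m - wallis_ratio (S m) = / (2 * INR (S m) ^ 2).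
Proof.
  unfold wallis_ratio. pose proof (wallis_I_succ m) as HI. pose proof (wallis_I_J m) as HJ.
  pose proof (wallis_I_pos m). pose proof (wallis_I_pos (S m)).
  assert (H2 : INR (S (S (2 * m))) = 2 * INR (S m)) by (rewrite !S_INR, mult_INR; simpl; ring).
  assert (H1 : INR (S (2 * m)) = 2 * INR (S m) - 1) by (rewrite !S_INR, mult_INR; simpl; ring).
  rewrite H1, H2 in *.
  assert (1 <= INR (S m)) by (apply (le_INR 1); lia).
  replace (wallis_I m) with (2 * INR (S m) * wallis_I (S m) / (2 * INR (S m) - 1))
    by (rewrite HI; field; lra).
  replace (wallis_J m)
    with ((wallis_I (S m) / INR (S m) + 2 * INR (S m) * wallis_J (S m)) / (2 * INR (S m) - 1))
    by (rewrite HJ; field; lra).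
  field. repeat split; lra.
Qed.

Lemma wallis_ratio_bound m : 0 <= wallis_ratio (S m) <= / INR (S (2 * m)).
Proof.
  unfold wallis_ratio. pose proof (wallis_J_bound m) as HJ. pose proof (wallis_I_succ m) as HI.
  pose proof (wallis_I_pos (S m)).
  assert (0 < INR (S (2 * m))) by (apply lt_0_INR; lia).
  rewrite S_INR in HI.
  split; [apply Rdiv_le_0_compat; lra |].
  apply (Rmult_le_reg_r (wallis_I (S m))); [lra |].
  replace (wallis_J (S m) / wallis_I (S m) * wallis_I (S m)) with (wallis_J (S m)) by (field; lra).
  replace (/ INR (S (2 * m)) * wallis_I (S m)) with (wallis_I m - wallis_I (S m))
    by (apply (Rmult_eq_reg_l (INR (S (2 * m))));
        [rewrite Rmult_minus_distr_l, <- HI; field |]; lra).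
  lra.
Qed.

Definition inv_sqr (k : nat) : R := / INR (S k) ^ 2.

Lemma sum_inv_sqr N : sum_n inv_sqr N = 2 * (wallis_ratio 0 - wallis_ratio (S N)).
Proof.
  induction N as [| N IH].
  - rewrite sum_O, wallis_ratio_step. unfold inv_sqr. simpl. at_type_R. field.
  - rewrite sum_Sn, IH. pose proof (wallis_ratio_step (S N)).
    assert (0 < INR (S (S N))) by (apply lt_0_INR; lia).
    change plus with Rplus. unfold inv_sqr.
    replace (wallis_ratio (S (S N))) with (wallis_ratio (S N) - / (2 * INR (S (S N)) ^ 2)) by lra.
    at_type_R. field. lra.
Qed.

Lemma is_series_inv_sqr : is_series inv_sqr (PI ^ 2 / 6).
Proof.
  assert (Hr : is_lim_seq (fun N => wallis_ratio (S N)) 0).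
  { apply is_lim_seq_le_le with (u := fun _ => 0) (w := fun N => / INR (S N)).
    - intros N. pose proof (wallis_ratio_bound N) as [H0 H1]. split; [exact H0 |].
      apply Rle_trans with (1 := H1), Rinv_le_contravar; [apply lt_0_INR; lia | apply le_INR; lia].
    - apply is_lim_seq_const.
    - exact is_lim_seq_inv_succ. }
  assert (Hs : is_lim_seq (sum_n inv_sqr) (2 * (PI ^ 2 / 12 - 0))).
  { apply (is_lim_seq_ext (fun N => 2 * (wallis_ratio 0 - wallis_ratio (S N))));
      [intros N; symmetry; apply sum_inv_sqr |].
    apply (is_lim_seq_scal_l _ 2 (PI ^ 2 / 12 - 0)), is_lim_seq_minus'; [| exact Hr].
    rewrite wallis_ratio_0. apply is_lim_seq_const. }
  replace (PI ^ 2 / 6) with (2 * (PI ^ 2 / 12 - 0)) by field.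
  exact Hs.
Qed.

Definition inv_succ (k : nat) : R := / INR (S k).

Lemma CV_radius_inv_sqr : CV_radius inv_sqr = 1.
Proof.
  replace (Finite 1) with (Finite (/ 1)) by (f_equal; field).
  apply CV_radius_finite_DAlembert; [| lra |].
  - intros n. apply Rinv_neq_0_compat, pow_nonzero, not_0_INR. lia.
  - apply (is_lim_seq_ext (fun n => (1 - / INR (S (S n))) * (1 - / INR (S (S n))))).
    + intros n. unfold inv_sqr. assert (0 < INR (S n)) by (apply lt_0_INR; lia).
      rewrite Rabs_right, (S_INR (S n)).
      * field. lra.
      * apply Rle_ge, Rlt_le, Rdiv_lt_0_compat; apply Rinv_0_lt_compat, pow_lt, lt_0_INR; lia.
    + replace (Finite 1) with (Finite ((1 - 0) * (1 - 0))) by (f_equal; ring).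
      pose proof (proj1 (is_lim_seq_incr_1 _ _) is_lim_seq_inv_succ) as H.
      apply is_lim_seq_mult'; apply is_lim_seq_minus'; auto using is_lim_seq_const.
Qed.

Lemma PS_derive_incr_inv_sqr n : PS_derive (PS_incr_1 inv_sqr) n = inv_succ n.
Proof.
  unfold PS_derive. change (PS_incr_1 inv_sqr (S n)) with (inv_sqr n).
  unfold inv_sqr, inv_succ. field. apply not_0_INR. lia.
Qed.

Lemma PS_derive_incr_inv_succ n : PS_derive (PS_incr_1 inv_succ) n = 1.
Proof.
  unfold PS_derive. change (PS_incr_1 inv_succ (S n)) with (inv_succ n).
  unfold inv_succ. field. apply not_0_INR. lia.
Qed.

Lemma CV_radius_inv_succ : CV_radius inv_succ = 1.
Proof.
  rewrite <- (CV_radius_ext _ _ PS_derive_incr_inv_sqr), CV_radius_derive, CV_radius_incr_1.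
  exact CV_radius_inv_sqr.
Qed.

Lemma Li2_PSeries x : Li2 x = PSeries (PS_incr_1 inv_sqr) x.
Proof.
  rewrite PSeries_incr_1. unfold Li2, PSeries. rewrite <- Series_scal_l.
  apply Series_ext. intros n. unfold inv_sqr. rewrite <- tech_pow_Rmult.
  field. apply not_0_INR. lia.
Qed.

Lemma Li2_1 : Li2 1 = PI ^ 2 / 6.
Proof.
  unfold Li2. apply is_series_unique.
  apply (is_series_ext inv_sqr); [| exact is_series_inv_sqr].
  intros n. unfold inv_sqr. rewrite pow1. unfold Rdiv. at_type_R. ring.
Qed.

Lemma PSeries_inv_succ x : Rabs x < 1 -> x * PSeries inv_succ x = - ln (1 - x).
Proof.
  intros Hx. apply Rabs_def2 in Hx.
  rewrite <- PSeries_incr_1.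
  set (G := fun t => PSeries (PS_incr_1 inv_succ) t + ln (1 - t)).
  enough (E : G x = G 0).
  { unfold G in E. rewrite PSeries_0, Rminus_0_r, ln_1 in E. simpl PS_incr_1 in E.
    change (@zero R_NormedModule) with 0 in E. lra. }
  apply (is_derive_0_eq G (-1) 1); [| lra | lra].
  intros t Ht.
  assert (Hgeom : PSeries (PS_derive (PS_incr_1 inv_succ)) t = / (1 - t)).
  { rewrite (PSeries_ext _ (fun _ => 1)) by apply PS_derive_incr_inv_succ.
    apply is_series_unique, (is_series_ext (fun n => t ^ n)).
    - intros n. symmetry. apply Rmult_1_l.
    - apply is_series_geom. apply Rabs_def1; lra. }
  replace 0 with (PSeries (PS_derive (PS_incr_1 inv_succ)) t + - / (1 - t))
    by (rewrite Hgeom; ring).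
  apply (is_derive_plus (K:=R_AbsRing) (V:=R_NormedModule)).
  - apply is_derive_PSeries. rewrite CV_radius_incr_1, CV_radius_inv_succ.
    simpl. apply Rabs_def1; lra.
  - auto_derive; [lra | field; lra].
Qed.

Lemma is_derive_Li2 y : 0 < y < 1 -> is_derive Li2 y (- ln (1 - y) / y).
Proof.
  intros Hy. assert (Hy1 : Rabs y < 1) by (rewrite Rabs_right; lra).
  replace (- ln (1 - y) / y) with (PSeries inv_succ y)
    by (rewrite <- PSeries_inv_succ by exact Hy1; field; lra).
  apply (is_derive_ext (PSeries (PS_incr_1 inv_sqr))); [intros; symmetry; apply Li2_PSeries |].
  rewrite <- (PSeries_ext _ _ y PS_derive_incr_inv_sqr).
  apply is_derive_PSeries. rewrite CV_radius_incr_1, CV_radius_inv_sqr. exact Hy1.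
Qed.

(* Abel's theorem applies because the series converges at its radius 1. *)
Lemma is_lim_seq_Li2_left (y : nat -> R) :
  is_lim_seq y 1 -> (forall k, y k < 1) -> is_lim_seq (fun k => Li2 (y k)) (Li2 1).
Proof.
  intros Hy Hlt.
  assert (Habel : filterlim (PSeries inv_sqr) (at_left 1) (locally (PSeries inv_sqr 1))).
  { pose proof (Abel inv_sqr) as H. rewrite CV_radius_inv_sqr in H.
    apply H; simpl; [lra | exact I |].
    exists (PI ^ 2 / 6). apply (is_series_ext inv_sqr); [| exact is_series_inv_sqr].
    intros n. unfold scal; simpl. rewrite pow_n_pow, pow1. unfold mult; simpl. ring. }
  assert (Hleft : filterlim y eventually (at_left 1)).
  { intros P [eps HP]. unfold filtermap.
    apply (filter_imp (fun k => ball 1 eps (y k))).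
    - intros k Hk. apply HP; auto.
    - exact (Hy _ (locally_ball 1 eps)). }
  rewrite Li2_PSeries, PSeries_incr_1.
  apply (is_lim_seq_ext (fun k => y k * PSeries inv_sqr (y k))).
  { intros k. rewrite Li2_PSeries, PSeries_incr_1. reflexivity. }
  apply is_lim_seq_mult'; [exact Hy |].
  exact (filterlim_comp _ _ _ y (PSeries inv_sqr) eventually (at_left 1) _ Hleft Habel).
Qed.

Definition dilog_combination (a : R) : R :=
  2 * Li2 (2 - / a) - 2 * Li2 a - Li2 ((2 * a - 1) / a ^ 2) - ln a ^ 2.

Lemma dilog_combination_args a : 1 / 2 < a < 1 ->
  0 < 2 - / a < 1 /\ 0 < (2 * a - 1) / a ^ 2 < 1.
Proof.
  intros Ha.
  replace (2 - / a) with ((2 * a - 1) / a) by (field; lra).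
  split; split; try (apply Rdiv_lt_0_compat; nra).
  - apply Rlt_div_l; lra.
  - apply Rlt_div_l; nra.
Qed.

(* The derivative vanishes because [1 - (2 - 1/a) = (1 - a)/a] and
   [1 - (2a - 1)/a^2 = ((1 - a)/a)^2]. *)
Lemma is_derive_dilog_combination a : 1 / 2 < a < 1 -> is_derive dilog_combination a 0.
Proof.
  intros Ha.
  destruct (dilog_combination_args a Ha) as [Hp Hq].
  set (p := 2 - / a) in *. set (q := (2 * a - 1) / a ^ 2) in *.
  assert (Dp : is_derive (fun a => Li2 (2 - / a)) a (/ a ^ 2 * (- ln (1 - p) / p))).
  { apply (is_derive_comp Li2 (fun a => 2 - / a)); [apply is_derive_Li2; exact Hp |].
    auto_derive; [lra | field; lra]. }
  assert (Dq : is_derive (fun a => Li2 ((2 * a - 1) / a ^ 2)) a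
                 (2 * (1 - a) / a ^ 3 * (- ln (1 - q) / q))).
  { apply (is_derive_comp Li2 (fun a => (2 * a - 1) / a ^ 2)); [apply is_derive_Li2; exact Hq |].
    auto_derive; [nra | field; lra]. }
  pose proof (is_derive_Li2 a ltac:(lra)) as Da.
  assert (Dl : is_derive (fun a => ln a ^ 2) a (2 * ln a / a)) by (auto_derive; [lra | field; lra]).
  assert (E1 : ln (1 - p) = ln (1 - a) - ln a)
    by (unfold p; rewrite <- ln_div by lra; f_equal; field; lra).
  assert (E2 : ln (1 - q) = 2 * (ln (1 - a) - ln a)).
  { unfold q. rewrite <- ln_div, <- (ln_pow _ 2) by (try apply Rdiv_lt_0_compat; lra).
    simpl INR. f_equal. field. lra. }
  replace 0 with (2 * (/ a ^ 2 * (- ln (1 - p) / p)) - 2 * (- ln (1 - a) / a)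
                  - 2 * (1 - a) / a ^ 3 * (- ln (1 - q) / q) - 2 * ln a / a)
    by (rewrite E1, E2; unfold p, q; field; repeat split; lra).
  repeat apply (is_derive_minus (K:=R_AbsRing) (V:=R_NormedModule)); auto;
    apply is_derive_scal; assumption.
Qed.

Lemma is_lim_seq_dilog_combination (b : nat -> R) :
  is_lim_seq b 1 -> (forall k, 1 / 2 < b k < 1) ->
  is_lim_seq (fun k => dilog_combination (b k)) (- Li2 1).
Proof.
  intros Hb Hb1.
  assert (Hcomp : forall (f : R -> R) L, ex_derive f 1 -> f 1 = L ->
                    is_lim_seq (fun k => f (b k)) L).
  { intros f L Hf <-. apply is_lim_seq_continuous; [| exact Hb].
    apply continuity_pt_filterlim, continuous_of_ex_derive, Hf. }
  replace (- Li2 1) with (2 * Li2 1 - 2 * Li2 1 - Li2 1 - 0) by ring.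
  repeat apply is_lim_seq_minus'.
  - apply (is_lim_seq_scal_l _ 2 (Li2 1)), is_lim_seq_Li2_left.
    + apply (Hcomp (fun a => 2 - / a)); [auto_derive; lra | field].
    + intros k. apply (dilog_combination_args _ (Hb1 k)).
  - apply (is_lim_seq_scal_l _ 2 (Li2 1)), is_lim_seq_Li2_left; [exact Hb | intros k; apply Hb1].
  - apply is_lim_seq_Li2_left.
    + apply (Hcomp (fun a => (2 * a - 1) / a ^ 2)); [auto_derive; lra | field].
    + intros k. apply (dilog_combination_args _ (Hb1 k)).
  - apply (Hcomp (fun a => ln a ^ 2)); [auto_derive; lra | rewrite ln_1; ring].
Qed.

Lemma dilog_combination_const a : 1 / 2 < a < 1 -> dilog_combination a = - zeta2.
Proof.
  intros Ha.
  set (b := fun k => 1 - / INR (k + 3)).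
  assert (Hb1 : forall k, 1 / 2 < b k < 1).
  { intros k.
    assert (3 <= INR (k + 3)) by (replace 3 with (INR 3) by (simpl; ring); apply le_INR; lia).
    assert (0 < / INR (k + 3) <= / 3)
      by (split; [apply Rinv_0_lt_compat | apply Rinv_le_contravar]; lra).
    unfold b. lra. }
  assert (Hb : is_lim_seq b 1).
  { replace (Finite 1) with (Finite (1 - 0)) by (f_equal; ring).
    apply is_lim_seq_minus'; [apply is_lim_seq_const |].
    exact (proj1 (is_lim_seq_incr_n _ 3 _) is_lim_seq_inv_INR). }
  pose proof (is_lim_seq_dilog_combination b Hb Hb1) as H.
  apply (is_lim_seq_ext _ (fun _ => dilog_combination a)) in H.
  - apply is_lim_seq_unique in H. rewrite Lim_seq_const, Li2_1 in H.
    unfold zeta2. congruence.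
  - intros k. apply (is_derive_0_eq _ (1 / 2) 1); auto using is_derive_dilog_combination.
Qed.

Lemma geom_sum_shift (x : R) m n :
  (1 - x) * sum_f_R0 (fun k => x ^ (m + k)) n = x ^ m - x ^ (m + S n).
Proof.
  induction n as [| n IH]; simpl sum_f_R0.
  - rewrite Nat.add_0_r, Nat.add_1_r. simpl. ring.
  - rewrite Rmult_plus_distr_l, IH.
    replace (m + S (S n))%nat with (S (m + S n)) by lia. simpl. ring.
Qed.

Lemma Pn_mul_1_minus n x : (0 < n)%nat ->
  (1 - x) * Pn n x = 2 * x ^ n - x * (x ^ n) ^ 2 - 1.
Proof.
  intros Hn. unfold Pn.
  pose proof (geom_sum_shift x 0 (n - 1)) as H0.
  replace (0 + S (n - 1))%nat with n in H0 by lia. simpl in H0.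
  rewrite Rmult_minus_distr_l, geom_sum_shift, H0.
  replace (n + S n)%nat with (S (n + n)) by lia.
  rewrite <- tech_pow_Rmult, pow_add. ring.
Qed.

Lemma Pn_1 n : (0 < n)%nat -> Pn n 1 = 1.
Proof.
  intros Hn. unfold Pn.
  rewrite (sum_eq _ (fun _ => 1)), (sum_eq (fun k => 1 ^ k) (fun _ => 1)), !sum_cte
    by (intros; apply pow1).
  replace (S (n - 1)) with n by lia. rewrite S_INR. ring.
Qed.

Lemma Pn_root n u : (0 < n)%nat -> 0 < u -> Pn n u = 0 ->
  u < 1 /\ u * (u ^ n) ^ 2 = 2 * u ^ n - 1.
Proof.
  intros Hn Hu HP.
  pose proof (Pn_mul_1_minus n u Hn) as E. rewrite HP, Rmult_0_r in E.
  split; [| lra].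
  destruct (Rtotal_order u 1) as [Hlt | [Heq | Hgt]]; [exact Hlt | |].
  - subst u. rewrite Pn_1 in HP by exact Hn. lra.
  - assert (1 < u ^ n) by (apply Rlt_pow_R1; auto).
    nra.
Qed.

Theorem theorem3p1 (n : nat) (u : R) :
  (0 < n)%nat -> 0 < u -> Pn n u = 0 ->
  2 * Li2 (u ^ (n + 1)) - 2 * Li2 (u ^ n) - Li2 u - (INR n) ^ 2 * (ln u) ^ 2 = - zeta2.
Proof.
  intros Hn Hu HP.
  destruct (Pn_root n u Hn Hu HP) as [Hu1 Hrel].
  set (a := u ^ n) in *.
  assert (Ha0 : 0 < a) by apply pow_lt, Hu.
  assert (Ha : 1 / 2 < a < 1).
  { split; [| apply pow_lt_1_compat; [lra | exact Hn]].
    assert (0 < u * a ^ 2) by (apply Rmult_lt_0_compat; [| apply pow_lt]; lra). lra. }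
  assert (Hsucc : u ^ (n + 1) = 2 - / a)
    by (rewrite pow_add, pow_1; fold a; apply (Rmult_eq_reg_r a); [field_simplify |]; nra).
  assert (Hu_eq : u = (2 * a - 1) / a ^ 2)
    by (apply (Rmult_eq_reg_r (a ^ 2)); [field_simplify |]; nra).
  assert (Hlog : INR n ^ 2 * ln u ^ 2 = ln a ^ 2) by (unfold a; rewrite ln_pow by exact Hu; ring).
  rewrite Hsucc, Hlog, Hu_eq at 1.
  exact (dilog_combination_const a Ha).
Qed.
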